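(* Let $a\in \mathcal{A}^d$ and $x\in\mathcal{A}$. Then the following are equivalent: (1) $a\in \mathcal{A}^{\mathrm{gcEP}}$ and $a^{\mathrm{gcEP}}=x$. (2) $xax=x$, $(ax)^*=ax$, $(xa-1)a^d=0$ and $im(x)\subseteq im(a^d)$. (3) $xax=x$, $\ell(x)=\ell(x^* )=\ell(a^d)$.
   Context: $\mathcal{A}$ is a complex Banach *-algebra with identity. $\mathcal{A}^{qnil}$ is the set of quasinilpotent elements ($\lim_n\|a^n\|^{1/n}=0$). $a\in\mathcal{A}^d$ means $a$ has a generalized Drazin inverse $a^d$, i.e. $a^d$ satisfies $a(a^d)^2=a^d$, $aa^d=a^da$, $a-a^2a^d\in\mathcal{A}^{qnil}$. An element $a$ has a generalized core-EP inverse if there is $x\in\mathcal{A}$ with $x=ax^2$, $(ax)^*=ax$, $\lim_{n\to\infty}\|a^n-xa^{n+1}\|^{1/n}=0$; such $x$ is unique and is denoted $a^{\mathrm{gcEP}}$, and $\mathcal{A}^{\mathrm{gcEP}}$ denotes the set of such elements. $\ell(\cdot)$ denotes the left annihilator, and $im(y)$ denotes the image (principal right ideal) $y\mathcal{A}$. *)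

From HB Require Import structures.
From mathcomp Require Import all_boot all_order all_algebra.
From mathcomp Require Import all_classical all_reals all_analysis.
From mathcomp Require Import complex.
Set Implicit Arguments. Unset Strict Implicit. Unset Printing Implicit Defensive.
Import Order.TTheory GRing.Theory Num.Theory.
Import numFieldNormedType.Exports.
Local Open Scope classical_set_scope.
Local Open Scope ring_scope.

HB.mixin Record isBanachStarAlgebra (R : realType) A of GRing.Algebra R[i] A := {
  nrm : A -> R ;
  nrm_eq0 : forall a : A, nrm a = 0 -> a = 0 ;
  nrmZ : forall (k : R[i]) (a : A), nrm (k *: a) = Normc.normc k * nrm a ;
  nrmD_le : forall a b : A, nrm (a + b) <= nrm a + nrm b ;
  nrmM_le : forall a b : A, nrm (a * b) <= nrm a * nrm b ;
  nrm_complete : forall u : nat -> A,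
    (forall e : R, 0 < e -> exists N : nat, forall m n : nat,
        (N <= m)%N -> (N <= n)%N -> nrm (u m - u n) < e) ->
    exists l : A, (fun n => nrm (u n - l)) @ \oo --> (0 : R) ;
  star : A -> A ;
  starD : forall a b : A, star (a + b) = star a + star b ;
  starZ : forall (k : R[i]) (a : A), star (k *: a) = k^* *: star a ;
  starM : forall a b : A, star (a * b) = star b * star a ;
  starK : forall a : A, star (star a) = a
}.

#[short(type="banachStarAlgType")]
HB.structure Definition BanachStarAlgebra (R : realType) :=
  { A of isBanachStarAlgebra R A & GRing.Algebra R[i] A }.

Notation "a ^*s" := (star a) (at level 2, format "a ^*s").

Section Defs.
Variables (R : realType) (A : banachStarAlgType R).

Definition nroot_nrm (n : nat) (y : A) : R := (nrm y) `^ (n%:R^-1).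

Definition qnil (a : A) : Prop :=
  (fun n : nat => nroot_nrm n (a ^+ n)) @ \oo --> (0 : R).

Definition is_gDrazin (a b : A) : Prop :=
  [/\ a * (b ^+ 2) = b, a * b = b * a & qnil (a - a ^+ 2 * b)].

Definition is_gcEP (a x : A) : Prop :=
  [/\ x = a * x ^+ 2, (a * x)^*s = a * x &
      (fun n : nat => nroot_nrm n (a ^+ n - x * a ^+ n.+1)) @ \oo --> (0 : R)].

Definition lann (y : A) : set A := [set z | z * y = 0].
Definition im (y : A) : set A := [set y * z | z in [set: A]].
End Defs.

From mathcomp Require Import all_boot all_order all_algebra.
From mathcomp Require Import all_classical all_reals all_analysis.
From mathcomp Require Import complex.
From mathcomp Require Import lra.
Import Order.TTheory GRing.Theory Num.Theory.
Import numFieldNormedType.Exports.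
Local Open Scope classical_set_scope.
Local Open Scope ring_scope.

(* Put p = a a^d. The g-Drazin hypothesis says that the n-th roots of the norms
   of (1 - p) a^n tend to 0, and the limit condition defining a^gcEP says the
   same of (1 - x a) a^n. If y = w_n z^(n+1) for every n, with w_n of this kind,
   then y = 0; applied to (1 - x a) x, (1 - x a) a^d and (1 - p) x, this turns
   (1) into the identities x a x = x, x a a^d = a^d and p x = x, which with
   the self-adjointness of a x amount to (2). Conversely these identities give
   (1 - x a) a^n = (1 - x a) (1 - p) a^n, hence (1).
   Given the identities, x and a^d generate the same principal right ideal,
   which contains x^* = a x x^*, while x = x^* a^* x; hence x, x^* and a^d
   have the same left annihilator. Conversely, equal annihilators transport
   (1 - x a) x = 0 and (1 - p) a^d = 0 to the other two elements, and
   x^* = x a x^* then makes a x self-adjoint. *)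

Section NormRoots.
Context {R : realType} {A : banachStarAlgType R}.
Implicit Types (y z : A) (v w : nat -> A).

Lemma nrm0 : nrm (0 : A) = 0.
Proof. by rewrite -(scale0r (0 : A)) nrmZ Normc.normc0 mul0r. Qed.

Lemma nrmN y : nrm (- y) = nrm y.
Proof. by rewrite -scaleN1r nrmZ normcN Normc.normc1 mul1r. Qed.

Lemma nrm_ge0 y : 0 <= nrm y.
Proof. by have := nrmD_le y (- y); rewrite subrr nrm0 nrmN; lra. Qed.

Lemma nrmX_le y n : nrm (y ^+ n.+1) <= nrm y ^+ n.+1.
Proof.
elim: n => [|n IHn]; first by rewrite !expr1.
rewrite exprS [nrm y ^+ _]exprS; apply: le_trans (nrmM_le _ _) _.
by rewrite ler_wpM2l ?nrm_ge0.
Qed.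

Lemma nrmMX_le y z n : nrm (y * z ^+ n.+1) <= nrm z * nrm z ^+ n * nrm y.
Proof.
rewrite -exprS [leRHS]mulrC; apply: le_trans (nrmM_le _ _) _.
by rewrite ler_wpM2l ?nrm_ge0 ?nrmX_le.
Qed.

Lemma powR_invnK (t : R) n : 0 <= t -> (0 < n)%N -> (t `^ n%:R^-1) ^+ n = t.
Proof.
move=> t_ge0 n_gt0; rewrite -powR_mulrn ?powR_ge0 // -powRrM mulVf ?powRr1 //.
by rewrite pnatr_eq0 -lt0n.
Qed.

Lemma nroot_nrm_lt n y (e : R) : (0 < n)%N -> 0 < e ->
  (nroot_nrm n y < e) = (nrm y < e ^+ n).
Proof.
move=> n_gt0 e_gt0; rewrite -[in RHS](@powR_invnK (nrm y) n) ?nrm_ge0 //.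
by rewrite ltr_pXn2r ?nnegrE ?powR_ge0 ?ltW.
Qed.

Definition nroot_null v : Prop := (fun n => nroot_nrm n (v n)) @ \oo --> (0 : R).

Lemma nroot_nullP v :
  nroot_null v <-> forall e : R, 0 < e -> \forall n \near \oo, nrm (v n) < e ^+ n.
Proof.
have nroot_ge0 n : 0 <= nroot_nrm n (v n) by apply: powR_ge0.
rewrite /nroot_null cvgr0Pnorm_lt; split=> vP e e_gt0; have [N _ vN] := vP e e_gt0;
  exists N.+1 => // n /= Nn; have n_gt0 : (0 < n)%N by apply: leq_ltn_trans Nn.
  by rewrite -nroot_nrm_lt // -[X in X < _]ger0_norm //; apply: vN; apply: ltnW.
by rewrite ger0_norm // nroot_nrm_lt //; apply: vN; apply: ltnW.
Qed.

Lemma nroot_null_dominated {v w} {C K : R} : 0 <= C -> 0 <= K -> nroot_null w ->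
  (forall n, (0 < n)%N -> nrm (v n) <= C * K ^+ n * nrm (w n)) -> nroot_null v.
Proof.
move=> C_ge0 K_ge0 /nroot_nullP wP vw; apply/nroot_nullP => e e_gt0.
(* d is chosen so that C (K d)^n <= C (e / (1 + C))^n < e^n. *)
pose f := e / (1 + C); pose d := f / (1 + K).
have f_gt0 : 0 < f by rewrite divr_gt0 //; lra.
have d_gt0 : 0 < d by rewrite divr_gt0 //; lra.
have Kd_le : K * d <= f by rewrite mulrCA ger_pMr // ler_pdivrMr; lra.
have [N _ wN] := wP d d_gt0; exists N.+1 => // -[//|n] /= Nn.
apply: le_lt_trans (vw n.+1 isT) _.
apply: (@le_lt_trans _ _ (C * f ^+ n.+1)).
  rewrite -mulrA ler_wpM2l // (@le_trans _ _ (K ^+ n.+1 * d ^+ n.+1)) //.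
    by rewrite ler_wpM2l ?exprn_ge0 // ltW // wN //=; apply: ltnW.
  rewrite -exprMn; apply: lerXn2r; rewrite // nnegrE.
  - exact: mulr_ge0 K_ge0 (ltW d_gt0).
  - exact: ltW.
have -> : e ^+ n.+1 = f ^+ n.+1 * ((1 + C) * (1 + C) ^+ n).
  by rewrite -exprS -exprMn /f divfK //; lra.
have CX_ge1 : 1 <= (1 + C) ^+ n by rewrite exprn_ege1 //; lra.
rewrite mulrC ltr_pM2l ?exprn_gt0 //; nra.
Qed.

Lemma nroot_null_const y : nroot_null (fun=> y) -> y = 0.
Proof.
move=> /nroot_nullP yP; apply: nrm_eq0; apply/eqP; rewrite eq_le nrm_ge0 andbT.
rewrite leNgt; apply/negP => y_gt0; pose e := Num.min (nrm y) 1.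
have e_gt0 : 0 < e by rewrite lt_min y_gt0 ltr01.
have e_le1 : e <= 1 by rewrite /e ge_min lexx orbT.
have e_le : e <= nrm y by rewrite /e ge_min lexx.
have [N _ yN] := yP e e_gt0; have /= := yN N.+1 (leqnSn _).
suff : e ^+ N.+1 <= nrm y by move=> /le_lt_trans lt_y /lt_y; rewrite ltxx.
by rewrite (le_trans _ e_le) // exprS ger_pMr // exprn_ile1 // ltW.
Qed.

Lemma nroot_null_eq0 {w y z} : nroot_null w ->
  (forall n, y = w n * z ^+ n.+1) -> y = 0.
Proof.
move=> w_null yw; apply: nroot_null_const.
apply: (nroot_null_dominated (nrm_ge0 z) (nrm_ge0 z) w_null) => n _.
by rewrite (yw n) nrmMX_le.
Qed.

End NormRoots.

Section RingFacts.
Context {T : pzRingType}.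
Implicit Types y z : T.

Lemma mul1Bl_eq0 y z : (1 - y) * z = 0 <-> y * z = z.
Proof.
rewrite mulrBl mul1r; split=> [/eqP|->]; last exact: subrr.
by rewrite subr_eq0 => /eqP.
Qed.

Lemma mulB1l_eq0 y z : (y - 1) * z = 0 <-> y * z = z.
Proof.
rewrite -mul1Bl_eq0 -opprB mulNr.
by split=> [/eqP|->]; rewrite ?oppr0 ?oppr_eq0 => // /eqP.
Qed.

Lemma mul1Bl_exprS y z n : (1 - z * y) * y ^+ n = y ^+ n - z * y ^+ n.+1.
Proof. by rewrite mulrBl mul1r exprS mulrA. Qed.

Lemma absorbX {y z} : z = y * z ^+ 2 -> forall n, y ^+ n * z ^+ n.+1 = z.
Proof.
move=> zE; elim=> [|n IHn]; first by rewrite mul1r expr1.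
by rewrite exprSr -mulrA -[n.+2]/(2 + n)%N exprD (mulrA y) -zE -exprS.
Qed.

End RingFacts.

Section StarFacts.
Context {R : realType} {A : banachStarAlgType R}.
Implicit Types y z t : A.

Lemma lann_sub_mulr y z t : z = y * t -> lann y `<=` lann z.
Proof. by move=> -> w; rewrite /lann /= => wy; rewrite mulrA wy mul0r. Qed.

Lemma star_selfadj y : y^*s = y * y^*s -> y^*s = y.
Proof. by move=> yE; rewrite -[RHS]starK yE starM starK. Qed.

End StarFacts.

Section GDrazin.
Context {R : realType} {A : banachStarAlgType R} {a ad : A}.
Hypothesis ad_eq : a * ad ^+ 2 = ad.
Hypothesis a_ad_comm : a * ad = ad * a.
Hypothesis res_qnil : qnil (a - a ^+ 2 * ad).

Lemma drazin_idem_ad : a * ad * ad = ad.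
Proof. by rewrite -mulrA -expr2. Qed.

Lemma drazin_idem_comm : a * (a * ad) = a * ad * a.
Proof. by rewrite -mulrA -a_ad_comm. Qed.

Lemma drazin_idem : a * ad * (a * ad) = a * ad.
Proof. by rewrite {2}a_ad_comm mulrA drazin_idem_ad -a_ad_comm. Qed.

Lemma drazin_residualX n : (a - a ^+ 2 * ad) ^+ n.+1 = (1 - a * ad) * a ^+ n.+1.
Proof.
have resE : a - a ^+ 2 * ad = (1 - a * ad) * a.
  by rewrite mulrBl mul1r -drazin_idem_comm mulrA -expr2.
have res_p : (a - a ^+ 2 * ad) * (a * ad) = 0.
  by rewrite resE -mulrA drazin_idem_comm mulrA (mul1Bl_eq0 _ _).2 ?drazin_idem ?mul0r.
elim: n => [|n IHn]; first by rewrite !expr1.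
by rewrite exprS IHn mulrA mulrBr mulr1 res_p subr0 resE -mulrA -exprS.
Qed.

Lemma drazin_residual_null : nroot_null (fun n => (1 - a * ad) * a ^+ n).
Proof.
apply: (nroot_null_dominated ler01 ler01 res_qnil) => -[//|n] _.
by rewrite expr1n !mul1r drazin_residualX.
Qed.

Lemma sub_im_drazinP x : im x `<=` im ad <-> a * ad * x = x.
Proof.
split=> [x_im | px].
  have [t _ <-] : im ad x by apply: x_im; exists 1; rewrite ?mulr1.
  by rewrite mulrA drazin_idem_ad.
by move=> _ [t _ <-]; exists (a * x * t); rewrite // !mulrA -a_ad_comm px.
Qed.

Context {x : A}.

Lemma gcEP_fix z : is_gcEP a x -> z = a * z ^+ 2 -> x * a * z = z.
Proof.
case=> xE _ u_null zE; apply/mul1Bl_eq0.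
apply: (nroot_null_eq0 (z := z) u_null) => n.
by rewrite -mul1Bl_exprS -mulrA (absorbX zE n).
Qed.

Lemma drazin_axx : x * a * ad = ad -> a * ad * x = x -> a * x * x = x.
Proof.
move=> xaad px; have -> : a * x * x = a * (x * a * ad) * x by rewrite -{2}px !mulrA.
by rewrite xaad.
Qed.

Lemma gcEP_of_drazin :
  (a * x)^*s = a * x -> x * a * ad = ad -> a * ad * x = x -> is_gcEP a x.
Proof.
move=> selfadj xaad px; split=> //.
  by rewrite expr2 mulrA drazin_axx.
have xa_p : (1 - x * a) * (a * ad) = 0.
  by apply/mul1Bl_eq0; rewrite a_ad_comm mulrA xaad.
apply: (nroot_null_dominated (nrm_ge0 (1 - x * a)) ler01 drazin_residual_null).
move=> n _; rewrite expr1n mulr1 -mul1Bl_exprS.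
have -> : (1 - x * a) * a ^+ n = (1 - x * a) * ((1 - a * ad) * a ^+ n).
  by rewrite mulrA mulrBr mulr1 xa_p subr0.
exact: nrmM_le.
Qed.

Lemma gcEP_drazin_range : is_gcEP a x -> a * ad * x = x.
Proof.
case=> xE _ _; apply/mul1Bl_eq0.
apply: (nroot_null_eq0 (z := x) drazin_residual_null) => n.
by rewrite -mulrA (absorbX xE n).
Qed.

Lemma lann_eq_of_drazin : x * a * x = x -> (a * x)^*s = a * x ->
  x * a * ad = ad -> a * ad * x = x ->
  lann x = lann x^*s /\ lann x^*s = lann ad.
Proof.
move=> xax selfadj xaad px.
have x_ad : x = ad * (a * x) by rewrite mulrA -a_ad_comm px.
have ad_x : ad = x * (a * ad) by rewrite mulrA xaad.
have x_xs : x = x^*s * (a^*s * x) by rewrite mulrA -starM selfadj drazin_axx.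
have xsE : x^*s = a * x * x^*s by rewrite -{1}xax !starM mulrA -starM selfadj.
have p_ax : a * ad * (a * x) = a * x by rewrite mulrA -drazin_idem_comm -mulrA px.
have xs_ad : x^*s = ad * (a * (a * x) * x^*s).
  by rewrite {1}xsE -{1}p_ax a_ad_comm !mulrA.
have lx_ad : lann x = lann ad.
  by apply/seteqP; split; [apply: lann_sub_mulr ad_x | apply: lann_sub_mulr x_ad].
have lx_xs : lann x = lann x^*s.
  apply/seteqP; split; last exact: lann_sub_mulr x_xs.
  by rewrite lx_ad; apply: lann_sub_mulr xs_ad.
by rewrite -lx_xs.
Qed.

Lemma drazin_of_lann_eq : x * a * x = x -> lann x = lann x^*s -> lann x^*s = lann ad ->
  [/\ (a * x)^*s = a * x, x * a * ad = ad & a * ad * x = x].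
Proof.
move=> xax lx_xs lxs_ad.
have onem_xa : lann x (1 - x * a) by apply/mul1Bl_eq0.
have xaad : x * a * ad = ad.
  by apply/mul1Bl_eq0; have : lann ad (1 - x * a) by rewrite -lxs_ad -lx_xs.
have xsE : x * a * x^*s = x^*s.
  by apply/mul1Bl_eq0; have : lann x^*s (1 - x * a) by rewrite -lx_xs.
have px : a * ad * x = x.
  apply/mul1Bl_eq0; have : lann ad (1 - a * ad) by apply/mul1Bl_eq0; exact: drazin_idem_ad.
  by rewrite -lxs_ad -lx_xs.
split=> //; apply: star_selfadj; rewrite starM mulrA; congr (_ * _).
by rewrite -{2}xsE !mulrA drazin_axx // xsE.
Qed.

End GDrazin.

Theorem theorem2p1 (R : realType) (A : banachStarAlgType R) (a ad x : A) :
  is_gDrazin a ad ->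
  [<-> is_gcEP a x;
       [/\ x * a * x = x, (a * x)^*s = a * x, (x * a - 1) * ad = 0
         & im x `<=` im ad];
       x * a * x = x /\ (lann x = lann (x^*s) /\ lann (x^*s) = lann ad)].
Proof.
case=> ad_eq a_ad_comm res_qnil; tfae.
- move=> x_gcEP; have [xE selfadj _] := x_gcEP.
  have xaad := gcEP_fix ad x_gcEP (esym ad_eq).
  have px := gcEP_drazin_range ad_eq a_ad_comm res_qnil x_gcEP.
  split=> //; first exact: gcEP_fix x x_gcEP xE; first exact/mulB1l_eq0.
  exact/(sub_im_drazinP ad_eq a_ad_comm).
- case=> xax selfadj /mulB1l_eq0 xaad /(sub_im_drazinP ad_eq a_ad_comm) px.
  by split=> //; exact (lann_eq_of_drazin a_ad_comm xax selfadj xaad px).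
- case=> xax [lx_xs lxs_ad].
  have [selfadj xaad px] := drazin_of_lann_eq ad_eq xax lx_xs lxs_ad.
  exact (gcEP_of_drazin ad_eq a_ad_comm res_qnil selfadj xaad px).
Qed.
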